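(* Let $q$ be a prime power and $d$ an integer with $5\le d\le q$. Let $\mathcal C$ be the $[q+1,q+2-d,d]_q$ normalized GDRS code and $\mathcal V^{(2)}$ a coset of weight $2$ of $\mathcal C$ with coset leader $\mathbf v_2(j_1,j_2;\gamma_1,\gamma_2)$. Let $\beta$ be a primitive element of $\mathbb F_q$ and let $\lambda(\gamma_1,\gamma_2)\in\mathbb Z_{q-1}$ satisfy $\beta^{\lambda(\gamma_1,\gamma_2)}=-\gamma_2/\gamma_1$. Then the number $B_{d-2}(\mathcal V^{(2)})$ of vectors of weight $d-2$ in $\mathcal V^{(2)}$ does not depend on the positions $j_1,j_2$ and equals $\mathrm P^+_{q-1,d-2}(\lambda(\gamma_1,\gamma_2))$.
   Context: Normalized GDRS code: the $\mathbb F_q$-linear code of length $q+1$ which is the kernel of the $(d-1)\times(q+1)$ matrix whose first $q$ columns are $(1,m,\dots,m^{d-2})^T$, $m$ running over $\mathbb F_q$, and whose last column is $(0,\dots,0,1)^T$. A coset of weight $2$ is a coset $\mathbf v+\mathcal C$ of minimum Hamming weight $2$; a coset leader is a vector of minimum weight in it. $\mathbf v_2(j_1,j_2;\gamma_1,\gamma_2)$ is the vector with $\gamma_1,\gamma_2\in\mathbb F_q^*$ in positions $j_1\ne j_2$ and zeros elsewhere. For positive integers $\mu<R$ and $\lambda\in\mathbb Z_R$, $\mathrm P^+_{R,\mu}(\lambda)$ is the number of $\mu$-element subsets of $\mathbb Z_R$ whose elements sum to $\lambda$ in $\mathbb Z_R$. *)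

From HB Require Import structures.
From mathcomp Require Import all_boot all_order all_algebra all_field.
Set Implicit Arguments. Unset Strict Implicit. Unset Printing Implicit Defensive.
Import GRing.Theory.
Local Open Scope ring_scope.

(* Coordinates of the normalized GDRS code of length q+1 are indexed by
   option F : position (Some m) is the column (1,m,...,m^(d-2))^T, m in F_q,
   and position None is the last column (0,...,0,1)^T. *)

Definition gdrs_col (F : finFieldType) (d : nat) (j : option F) (i : nat) : F :=
  match j with
  | Some m => m ^+ i
  | None => if i == (d - 2)%N then 1 else 0
  end.

Definition in_gdrs (F : finFieldType) (d : nat) (x : {ffun option F -> F}) : bool :=
  [forall i : 'I_(d - 1), \sum_(j : option F) gdrs_col d j i * x j == 0].

Definition hwt (F : finFieldType) (x : {ffun option F -> F}) : nat :=
  #|[set j | x j != 0]|.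

Definition v2 (F : finFieldType) (j1 j2 : option F) (g1 g2 : F)
  : {ffun option F -> F} :=
  [ffun j => if j == j1 then g1 else if j == j2 then g2 else 0].

Definition coset_weight (F : finFieldType) (d : nat) (v : {ffun option F -> F})
  (w : nat) : Prop :=
  (exists2 x, in_gdrs d (x - v) & hwt x = w) /\
  (forall x, in_gdrs d (x - v) -> (w <= hwt x)%N).

Definition coset_B (F : finFieldType) (d : nat) (v : {ffun option F -> F})
  (w : nat) : nat :=
  #|[set x : {ffun option F -> F} | in_gdrs d (x - v) && (hwt x == w)]|.

Definition Pplus (R mu lam : nat) : nat :=
  #|[set S : {set 'I_R} | (#|S| == mu) && ((\sum_(i in S) (i : nat)) %% R == lam %% R)%N]|.

(* A word y lies in the code iff it is orthogonal to the evaluation vectors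
   (p.[m])_m completed at None by the coefficient of degree d - 2, for every
   polynomial p of degree at most d - 2.  Taking for p the locator polynomial
   L_S of the support S of a vector x of weight d - 2 in v2(j1,j2;g1,g2) + C
   shows that S avoids j1 and j2 and that g1 L_S(j1) + g2 L_S(j2) = 0;
   conversely, Lagrange interpolation produces a codeword with any support of
   size d, from which one builds such an x for each S satisfying the relation,
   and x is unique because the minimum distance is d.  The relation says
   prod_(s in S) (j1 - s) / (j2 - s) = -g2 / g1, and s |-> (j1 - s) / (j2 - s)
   maps the q - 1 positions other than j1, j2 bijectively onto F_q^*: taking
   logarithms in base beta, the admissible S become the (d - 2)-subsets of
   Z_(q-1) with sum lambda. *)

From HB Require Import structures.
From mathcomp Require Import all_boot all_order all_algebra all_field.
From mathcomp Require Import zify ring.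
Import GRing.Theory.
Local Open Scope ring_scope.
Set Implicit Arguments. Unset Strict Implicit. Unset Printing Implicit Defensive.

Lemma big_option (R : Type) (idx : R) (op : Monoid.com_law idx) (T : finType)
    (f : option T -> R) :
  \big[op/idx]_(j : option T) f j = op (f None) (\big[op/idx]_(t : T) f (Some t)).
Proof.
rewrite (bigD1 None) //= (reindex_omap Some id) /=; last by case.
by congr (op _ _); apply: eq_bigl => t; rewrite eqxx.
Qed.

Lemma lagrange_sum_expr (F : finFieldType) (U : {set F}) (i : nat) :
  (i < #|U|)%N ->
  \sum_(t in U) t ^+ i / \prod_(s in U :\ t) (t - s) = (i == #|U|.-1)%:R.
Proof.
move=> lt_iU.
pose P t := \prod_(s in U :\ t) ('X - s%:P).
have P_at t u : (P t).[u] = \prod_(s in U :\ t) (u - s).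
  by rewrite horner_prod; apply: eq_bigr => s _; rewrite hornerXsubC.
have P_self_neq0 t : (P t).[t] != 0.
  by rewrite P_at; apply/prodf_neq0 => s; rewrite in_setD1 subr_eq0 eq_sym => /andP[].
have P_other t u : u \in U -> u != t -> (P t).[u] = 0.
  by move=> uU ut; rewrite P_at (bigD1 u) /= ?in_setD1 ?ut ?uU // subrr mul0r.
have size_P t : t \in U -> size (P t) = #|U|.
  by move=> tU; rewrite /P -big_enum size_prod_XsubC -cardE (cardsD1 t U) tU.
have interp : \sum_(t in U) (t ^+ i / (P t).[t]) *: P t = 'X^i.
  apply/eqP; rewrite -subr_eq0; apply/eqP.
  apply: (@roots_geq_poly_eq0 _ _ (enum U)); last 2 first.
  - exact: enum_uniq.
  - rewrite -cardE; apply: (leq_trans (size_polyD _ _)).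
    rewrite geq_max size_polyN size_polyXn lt_iU andbT.
    apply: (leq_trans (size_sum _ _ _)); apply/bigmax_leqP => t tU.
    by apply: (leq_trans (size_scale_leq _ _)); rewrite size_P.
  apply/allP => u; rewrite mem_enum => uU.
  rewrite rootE hornerD hornerN hornerXn horner_sum (bigD1 u) //= big1 ?addr0.
    by rewrite hornerZ mulfVK // subrr.
  by move=> t /andP[_ tu]; rewrite hornerZ (P_other t u) ?mulr0 // eq_sym.
have := congr1 (fun p : {poly F} => p`_(#|U|.-1)) interp.
rewrite coefXn coef_sum eq_sym => <-.
apply: eq_bigr => t tU; rewrite coefZ -P_at.
have /monicP : P t \is monic by apply: monic_prod_XsubC.
by rewrite lead_coefE size_P // => ->; rewrite mulr1.
Qed.

Local Notation supp x := [set j | x j != 0].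

(* At the position None a polynomial of degree d - 2 is read through its
   leading coefficient, so a monic linear factor contributes 1 there. *)
Definition lin_at (F : finFieldType) (j : option F) (s : F) : F :=
  if j is Some m then m - s else 1.

Lemma lin_at_neq0 (F : finFieldType) (j : option F) (s : F) :
  j != Some s -> lin_at j s != 0.
Proof.
by case: j => [m|] /= js; rewrite ?oner_neq0 // subr_eq0; apply: contraNneq js => ->.
Qed.

Definition locator_at (F : finFieldType) (j : option F) (S : {set option F}) : F :=
  \prod_(s : F | Some s \in S) lin_at j s.

Lemma locator_at_Some (F : finFieldType) (m : F) (S : {set option F}) :
  Some m \in S -> locator_at (Some m) S = 0.
Proof. by move=> mS; rewrite /locator_at (bigD1 m) //= subrr mul0r. Qed.

Lemma locator_at_neq0 (F : finFieldType) (j : option F) (S : {set option F}) :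
  j \notin S -> locator_at j S != 0.
Proof.
move=> jS; apply/prodf_neq0 => s sS; apply: lin_at_neq0.
by apply: contraNneq jS => ->.
Qed.

Lemma card_set_option (T : finType) (S : {set option T}) :
  #|S| = ((None \in S) + #|[set t : T | Some t \in S]|)%N.
Proof.
rewrite (cardsD1 None S); congr (_ + _)%N.
have -> : S :\ None = Some @: [set t | Some t \in S].
  apply/setP => -[t|]; rewrite in_setD1 //=.
  by rewrite mem_imset ?inE // => a b [].
  by apply/esym/imsetP => -[].
by rewrite card_imset // => a b [].
Qed.

Lemma sum_notin_eq_in (T : finType) (R : pzSemiRingType) (S J : {set T})
    (f y : T -> R) :
  [disjoint J & S] -> (forall j, j \notin S -> j \notin J -> y j = 0) ->
  \sum_(j | j \notin S) f j * y j = \sum_(j in J) f j * y j.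
Proof.
move=> JS y0; rewrite big_mkcond [RHS]big_mkcond; apply: eq_bigr => j _.
have [jJ|jJ] := boolP (j \in J).
  by rewrite (disjointFr JS jJ).
by case: ifP => // jS; rewrite y0 ?jS ?mulr0.
Qed.

Section GDRS.

Variables (F : finFieldType) (d : nat).
Hypothesis d_ge2 : (2 <= d)%N.
Local Notation word := {ffun option F -> F}.

Lemma in_gdrsB (x y : word) : in_gdrs d x -> in_gdrs d y -> in_gdrs d (x - y).
Proof.
move=> /forallP x_in /forallP y_in; apply/forallP => i.
under eq_bigr => j _ do rewrite !ffunE mulrBr.
by rewrite sumrB (eqP (x_in i)) (eqP (y_in i)) subrr.
Qed.

Lemma in_gdrsZ (k : F) (x : word) : in_gdrs d x -> in_gdrs d [ffun j => k * x j].
Proof.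
move=> /forallP x_in; apply/forallP => i.
under eq_bigr => j _ do rewrite ffunE mulrCA.
by rewrite -mulr_sumr (eqP (x_in i)) mulr0.
Qed.

Lemma in_gdrs_poly (y : word) (p : {poly F}) :
  in_gdrs d y -> (size p <= d - 1)%N ->
  \sum_(m : F) p.[m] * y (Some m) + p`_(d - 2) * y None = 0.
Proof.
move=> /forallP y_in size_p.
transitivity (\sum_(i < d - 1) p`_i * \sum_j gdrs_col d j i * y j); last first.
  by apply: big1 => i _; rewrite (eqP (y_in i)) mulr0.
under [RHS]eq_bigr => i _ do rewrite big_option mulrDr mulr_sumr.
rewrite big_split /= addrC exchange_big /=; congr (_ + _).
  apply: eq_bigr => m _; rewrite (horner_coef_wide m size_p) mulr_suml.
  by apply: eq_bigr => i _; rewrite mulrA.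
have lt_d2 : (d - 2 < d - 1)%N by lia.
rewrite (bigD1 (Ordinal lt_d2)) //= eqxx mul1r big1 ?addr0 // => i.
by rewrite -val_eqE /= => /negbTE ->; rewrite mul0r mulr0.
Qed.

(* The locator polynomial of the finite part of [S] has coefficient 0 in
   degree d - 2 when None is in [S], and 1 when [S] has d - 2 finite points. *)
Lemma gdrs_locator_orth (y : word) (S : {set option F}) :
  in_gdrs d y -> (#|S| <= d - 2)%N ->
  [|| None \in S, y None == 0 | #|S| == (d - 2)%N] ->
  \sum_(j | j \notin S) locator_at j S * y j = 0.
Proof.
move=> y_in le_S_d2 None_ok.
pose U := [set s : F | Some s \in S].
pose p := \prod_(s in U) ('X - s%:P).
have size_p : size p = #|U|.+1 by rewrite /p -big_enum size_prod_XsubC -cardE.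
have card_S := card_set_option S; rewrite -/U in card_S.
have le_U_d2 : (#|U| <= d - 2)%N by rewrite (leq_trans _ le_S_d2) // card_S leq_addl.
have p_at m : p.[m] = locator_at (Some m) S.
  rewrite horner_prod /locator_at; apply: eq_big => [s|s _]; first by rewrite inE.
  by rewrite hornerXsubC.
rewrite -[RHS](in_gdrs_poly (p := p) y_in); last by rewrite size_p; lia.
rewrite big_mkcond big_option /= addrC; congr (_ + _).
  apply: eq_bigr => m _; rewrite p_at.
  by case: ifPn => // /negPn /locator_at_Some ->; rewrite mul0r.
rewrite {1}/locator_at big1 // mul1r.
have [NoneS|NoneS] /= := boolP (None \in S).
  by rewrite nth_default ?mul0r // size_p; move: le_S_d2; rewrite card_S NoneS add1n.
move: None_ok; rewrite (negPf NoneS) /= => /orP[/eqP -> | /eqP card_d2].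
  by rewrite !mulr0.
have /monicP : p \is monic by apply: monic_prod_XsubC.
move: card_S; rewrite (negPf NoneS) add0n card_d2 => ->.
by rewrite lead_coefE size_p /= => ->; rewrite mul1r.
Qed.

Lemma gdrs_min_weight (y : word) : in_gdrs d y -> (hwt y < d)%N -> y = 0.
Proof.
move=> y_in lt_wt_d.
have y_Some t : y (Some t) = 0.
  apply/eqP/negPn/negP => yt.
  pose S := supp y :\ Some t.
  have tS : Some t \notin S by rewrite in_setD1 eqxx.
  have card_S : #|S| = (hwt y).-1 by rewrite /hwt [in RHS](cardsD1 (Some t)) inE yt.
  have le_S_d2 : (#|S| <= d - 2)%N by rewrite card_S; lia.
  have None_ok : [|| None \in S, y None == 0 | #|S| == (d - 2)%N].
    by rewrite !inE /=; case: eqP.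
  have := gdrs_locator_orth y_in le_S_d2 None_ok.
  rewrite (@sum_notin_eq_in _ _ S [set Some t]) ?big_set1 ?disjoints1 //.
    by move/eqP; rewrite mulf_eq0 (negPf yt) orbF; apply/negP/locator_at_neq0.
  by move=> j; rewrite !inE negb_and negbK => /orP[/eqP -> | /negPn/eqP //]; rewrite eqxx.
have y_None : y None = 0.
  have := in_gdrs_poly (p := 'X^(d - 2)) y_in.
  rewrite size_polyXn coefXn eqxx mul1r big1 ?add0r => [-> //|m _]; first by lia.
  by rewrite y_Some mulr0.
by apply/ffunP => -[t|]; rewrite ffunE.
Qed.

Lemma gdrs_eq_of_supp (x1 x2 : word) :
  in_gdrs d (x1 - x2) -> supp x1 = supp x2 -> (hwt x1 < d)%N -> x1 = x2.
Proof.
move=> x12_in supp12 lt_wt_d; apply/eqP; rewrite -subr_eq0; apply/eqP.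
apply: gdrs_min_weight x12_in (leq_ltn_trans _ lt_wt_d).
apply: subset_leq_card; apply/subsetP => j; rewrite !inE ffunE.
move/setP/(_ j): supp12; rewrite !inE => supp12_j; apply: contraNN => /eqP x1j0.
by move: supp12_j; rewrite !ffunE x1j0 eqxx /= => /esym/negbFE/eqP ->; rewrite subrr.
Qed.

Lemma gdrs_codeword_supp (T : {set option F}) :
  #|T| = d -> exists2 c : word, in_gdrs d c & supp c = T.
Proof.
move=> card_T.
pose U := [set s : F | Some s \in T].
have card_TU := card_set_option T; rewrite -/U card_T in card_TU.
(* By the Lagrange identity these weights annihilate every row of the
   parity-check matrix; the weight -1 at None cancels row d - 2 when None is
   in [T]. *)
pose w j := if j is Some t then (\prod_(s in U :\ t) (t - s))^-1 else -1.
have w_neq0 j : w j != 0.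
  case: j => [t|] /=; last by rewrite oppr_eq0 oner_eq0.
  by rewrite invr_eq0; apply/prodf_neq0 => s; rewrite in_setD1 subr_eq0 eq_sym => /andP[].
exists [ffun j => if j \in T then w j else 0]; last first.
  by apply/setP => j; rewrite !inE ffunE; case: ifP; rewrite ?w_neq0 ?eqxx.
apply/forallP => i; rewrite big_option !ffunE /=.
have -> : \sum_(t : F) t ^+ i * [ffun j => if j \in T then w j else 0] (Some t)
    = \sum_(t in U) t ^+ i / \prod_(s in U :\ t) (t - s).
  rewrite [RHS]big_mkcond; apply: eq_bigr => t _; rewrite ffunE inE.
  by case: ifP; rewrite ?mulr0.
have lt_i_d1 := ltn_ord i.
rewrite lagrange_sum_expr; last by case: (None \in T) card_TU => /=; lia.
move: card_TU; set u := #|U|; case: (None \in T) => /= card_TU.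
  have -> : u.-1 = (d - 2)%N by rewrite -subn1; lia.
  by case: (i == _ :> nat); rewrite ?mul1r ?mul0r ?addNr ?addr0.
have -> : (i == u.-1 :> nat) = false by apply/negbTE/eqP; rewrite -subn1; lia.
by rewrite mulr0 addr0.
Qed.

End GDRS.

Section Coset.

Variables (F : finFieldType) (d : nat) (j1 j2 : option F) (g1 g2 : F).
Hypotheses (d_ge5 : (5 <= d)%N) (j12 : j1 != j2).
Hypotheses (g1_neq0 : g1 != 0) (g2_neq0 : g2 != 0).
Local Notation word := {ffun option F -> F}.
Local Notation v := (v2 j1 j2 g1 g2).
Local Notation K := (~: [set j1; j2]).

Let d_ge2 : (2 <= d)%N. Proof. by rewrite (leq_trans _ d_ge5). Qed.

Lemma supp_v2 : supp v = [set j1; j2].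
Proof.
apply/setP => j; rewrite !inE ffunE.
by case: (eqVneq j j1) => [_|_]; last case: (eqVneq j j2) => [_|_];
  rewrite ?g1_neq0 ?g2_neq0 ?eqxx.
Qed.

Lemma coset_supp_sub (x : word) :
  in_gdrs d (x - v) -> hwt x = (d - 2)%N -> supp x \subset K.
Proof.
move=> xv_in wt_x; rewrite -disjoints_subset -setI_eq0.
apply/negPn/negP; rewrite -card_gt0 => meet.
have wt_xv : (hwt (x - v)%R < d)%N.
  rewrite (leq_ltn_trans (subset_leq_card (_ : _ \subset supp x :|: [set j1; j2]))) //.
    apply/subsetP => j; rewrite -supp_v2 !inE !ffunE.
    by apply: contraR; rewrite negb_or !negbK => /andP[/eqP -> /eqP ->]; rewrite subrr.
  by rewrite cardsU cards2 j12; move: wt_x meet; rewrite /hwt; lia.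
have /eqP := gdrs_min_weight d_ge2 xv_in wt_xv; rewrite subr_eq0 => /eqP x_v.
by move: wt_x; rewrite x_v /hwt supp_v2 cards2 j12; lia.
Qed.

Lemma coset_locator_relation (x : word) :
  in_gdrs d (x - v) -> hwt x = (d - 2)%N ->
  g1 * locator_at j1 (supp x) + g2 * locator_at j2 (supp x) = 0.
Proof.
move=> xv_in wt_x.
have x_j12 j : j \in [set j1; j2] -> x j = 0.
  move=> j_in; apply/eqP/negPn/negP => xj.
  by have := subsetP (coset_supp_sub xv_in wt_x) j; rewrite in_setC j_in inE xj => /(_ isT).
have := gdrs_locator_orth d_ge2 xv_in (eq_leq wt_x).
rewrite -/(hwt x) wt_x eqxx !orbT => /(_ isT).
rewrite (@sum_notin_eq_in _ _ _ [set j1; j2]); first last.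
- move=> j; rewrite !inE !ffunE negbK negb_or => /eqP -> /andP[/negPf -> /negPf ->].
  by rewrite subrr.
- by rewrite disjoint_sym disjoints_subset; apply: coset_supp_sub.
rewrite big_setU1 ?big_set1 ?in_set1 //= !ffunE eqxx eq_sym (negPf j12) eqxx.
rewrite !x_j12 ?inE ?eqxx ?orbT // !sub0r !mulrN -opprD => /eqP.
by rewrite oppr_eq0 mulrC [_ * g2]mulrC => /eqP.
Qed.

Lemma coset_vector_of_relation (S : {set option F}) :
  S \subset K -> #|S| = (d - 2)%N ->
  g1 * locator_at j1 S + g2 * locator_at j2 S = 0 ->
  exists2 x : word, in_gdrs d (x - v) & supp x = S.
Proof.
move=> SK card_S rel_S.
have j1S : j1 \notin S by apply/negP => /(subsetP SK); rewrite !inE eqxx.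
have j2S : j2 \notin S by apply/negP => /(subsetP SK); rewrite !inE eqxx orbT.
have card_T : #|j1 |: (j2 |: S)| = d.
  rewrite !cardsU1 !in_setU1 (negPf j1S) (negPf j2S) (negPf j12) card_S; lia.
have [c c_in supp_c] := gdrs_codeword_supp d_ge2 card_T.
have c_neq0 j : (c j != 0) = [|| j == j1, j == j2 | j \in S].
  by move/setP/(_ j): supp_c; rewrite !inE.
have c1_neq0 : c j1 != 0 by rewrite c_neq0 eqxx.
have rel_c : locator_at j1 S * c j1 + locator_at j2 S * c j2 = 0.
  have := gdrs_locator_orth d_ge2 c_in (eq_leq card_S).
  rewrite card_S eqxx !orbT => /(_ isT).
  rewrite (@sum_notin_eq_in _ _ _ [set j1; j2]); first last.
  - by move=> j jS; rewrite !inE negb_or => /andP[j1' j2']; apply/eqP;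
      move: (c_neq0 j); rewrite (negPf j1') (negPf j2') (negPf jS) => /negbFE.
  - by rewrite disjoint_sym disjoints_subset.
  by rewrite big_setU1 ?big_set1 ?in_set1.
pose k := - g1 / c j1.
pose x : word := v + [ffun j => k * c j].
have xv : x - v = [ffun j => k * c j] by rewrite /x addrC addKr.
have x_j2 : g2 + k * c j2 = 0.
  have : (g2 + k * c j2) * (c j1 * locator_at j2 S) =
      c j1 * (g1 * locator_at j1 S + g2 * locator_at j2 S) -
      g1 * (locator_at j1 S * c j1 + locator_at j2 S * c j2) by rewrite /k; field.
  rewrite rel_S rel_c !mulr0 subr0 => /eqP.
  by rewrite !mulf_eq0 (negPf c1_neq0) (negPf (locator_at_neq0 j2S)) !orbF => /eqP.
exists x; first by rewrite xv in_gdrsZ.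
apply/setP => j; rewrite !inE !ffunE.
case: (eqVneq j j1) => [->|j1']; first by rewrite /k divfK // addrN eqxx (negPf j1S).
case: (eqVneq j j2) => [->|j2']; first by rewrite x_j2 eqxx (negPf j2S).
rewrite add0r mulf_eq0 negb_or c_neq0 (negPf j1') (negPf j2') /=.
by rewrite /k mulf_neq0 ?oppr_eq0 ?invr_eq0.
Qed.

Lemma card_coset_d2 :
  coset_B d v (d - 2) = #|[set S : {set option F} | (S \subset K) &&
    (#|S| == (d - 2)%N) && (g1 * locator_at j1 S + g2 * locator_at j2 S == 0)]|.
Proof.
rewrite /coset_B; set A := [set x | _].
have supp_inj : {in A &, injective (fun x : word => supp x)}.
  move=> x1 x2; rewrite !inE => /andP[x1_in /eqP wt1] /andP[x2_in _] /= supp12.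
  apply: (gdrs_eq_of_supp d_ge2 _ supp12); last by rewrite wt1; lia.
  have -> : x1 - x2 = (x1 - v) - (x2 - v) by rewrite opprB addrA subrK.
  exact: in_gdrsB.
rewrite -(card_in_imset supp_inj); apply: eq_card => S; rewrite inE.
apply/imsetP/idP => [[x]|].
  rewrite inE => /andP[x_in /eqP wt_x] ->.
  by rewrite coset_supp_sub //= -/(hwt x) wt_x eqxx coset_locator_relation ?eqxx.
move=> /andP[/andP[SK /eqP card_S] /eqP rel_S].
have [x x_in supp_x] := coset_vector_of_relation SK card_S rel_S.
by exists x => //; rewrite inE x_in /hwt supp_x card_S eqxx.
Qed.

End Coset.

(* For finite [j1], [j2], [ratio_at j1 j2] is the Moebius transformation
   s |-> (j1 - s) / (j2 - s) of the projective line, which sends [j1] to 0 and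
   [j2] to infinity: it maps the other q - 1 positions bijectively onto F^*. *)
Definition ratio_at (F : finFieldType) (j1 j2 s : option F) : F :=
  if s is Some t then lin_at j1 t / lin_at j2 t else 1.

Lemma locator_at_ratio (F : finFieldType) (j1 j2 : option F) (S : {set option F}) :
  locator_at j1 S / locator_at j2 S = \prod_(s in S) ratio_at j1 j2 s.
Proof.
rewrite /locator_at -prodf_div [RHS]big_mkcond big_option /= [LHS]big_mkcond /=.
by rewrite if_same mul1r.
Qed.

Section MoebiusRatio.

Variables (F : finFieldType) (j1 j2 : option F).
Hypothesis j12 : j1 != j2.
Local Notation K := (~: [set j1; j2]).

Lemma ratio_at_neq0 (s : option F) : s \in K -> ratio_at j1 j2 s != 0.
Proof.
rewrite !inE negb_or; case: s => [t|] /= /andP[t1 t2]; last exact: oner_neq0.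
by rewrite mulf_neq0 ?invr_eq0 ?lin_at_neq0 // eq_sym.
Qed.

Lemma ratio_at_inj : {in K &, injective (ratio_at j1 j2)}.
Proof.
move=> a b; rewrite !inE !negb_or => /andP[a1 a2] /andP[b1 b2].
case: j1 j2 j12 a1 a2 b1 b2 => [m1|] [m2|] // m12;
  case: a b => [a|] [b|] //= a1 a2 b1 b2.
- have a2' : m2 - a != 0 by rewrite subr_eq0 eq_sym.
  have b2' : m2 - b != 0 by rewrite subr_eq0 eq_sym.
  move/eqP; rewrite eqr_div // -subr_eq0.
  have -> : (m1 - a) * (m2 - b) - (m1 - b) * (m2 - a) = (m1 - m2) * (a - b) by ring.
  rewrite mulf_eq0 !subr_eq0 => /orP[/eqP m12' | /eqP -> //].
  by move: m12; rewrite m12' eqxx.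
- by move=> /divr1_eq /addIr m12'; move: m12; rewrite m12' eqxx.
- by move=> /esym /divr1_eq /addIr m12'; move: m12; rewrite m12' eqxx.
- by rewrite !divr1 => /addrI /oppr_inj ->.
- by rewrite !div1r => /invr_inj /addrI /oppr_inj ->.
Qed.

Lemma prim_root_log (beta z : F) :
  (#|F|.-1).-primitive_root beta -> z != 0 -> exists i : 'I_(#|F|.-1), beta ^+ i = z.
Proof.
move=> beta_prim z_neq0.
have card_F : #|F| = (#|F|.-1).+1 by rewrite prednK // (cardD1 0) inE.
have z_unity : z ^+ #|F|.-1 = 1.
  by apply: (mulfI z_neq0); rewrite -exprS -card_F expf_card mulr1.
by have [i ->] := prim_rootP beta_prim z_unity; exists i.
Qed.

Lemma exists_log_ratio (beta : F) :
  (#|F|.-1).-primitive_root beta ->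
  exists psi : option F -> 'I_(#|F|.-1),
    [/\ {in K, forall s, beta ^+ psi s = ratio_at j1 j2 s},
        {in K &, injective psi} & psi @: K = setT].
Proof.
move=> beta_prim.
have /fin_all_exists [psi psiE] : forall s : option F,
    exists i : 'I_(#|F|.-1), s \in K -> beta ^+ i = ratio_at j1 j2 s.
  move=> s; have [sK|_] := boolP (s \in K).
    by have [i <-] := prim_root_log beta_prim (ratio_at_neq0 sK); exists i.
  by have [i _] := prim_root_log beta_prim (oner_neq0 F); exists i.
have psi_inj : {in K &, injective psi}.
  by move=> a b aK bK psi_ab; apply: ratio_at_inj; rewrite // -!psiE // psi_ab.
exists psi; split => //; apply/eqP.
rewrite eqEcard subsetT cardsT card_ord card_in_imset //.
by have := cardsC [set j1; j2]; rewrite cards2 j12 card_option /= -subn1; lia.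
Qed.

Lemma locator_relation_log (psi : option F -> 'I_(#|F|.-1)) (beta g1 g2 : F)
    (lam : 'I_(#|F|.-1)) (S : {set option F}) :
  (#|F|.-1).-primitive_root beta -> g1 != 0 -> beta ^+ lam = - g2 / g1 ->
  {in K, forall s, beta ^+ psi s = ratio_at j1 j2 s} -> S \subset K ->
  (g1 * locator_at j1 S + g2 * locator_at j2 S == 0) =
  (\sum_(s in S) psi s == lam %[mod #|F|.-1])%N.
Proof.
move=> beta_prim g1_neq0 beta_lam psiE SK.
have j2S : j2 \notin S by apply/negP => /(subsetP SK); rewrite !inE eqxx orbT.
rewrite -(eq_prim_root_expr beta_prim) beta_lam -prodrXr.
rewrite (eq_bigr (ratio_at j1 j2)) => [|s sS]; last exact/psiE/(subsetP SK).
by rewrite -locator_at_ratio eqr_div ?locator_at_neq0 // addr_eq0 mulrC mulNr.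
Qed.

End MoebiusRatio.

Lemma card_subsets_imset (T U : finType) (K : {set T}) (f : T -> U)
    (P : pred {set U}) :
  {in K &, injective f} -> f @: K = setT ->
  #|[set S : {set T} | (S \subset K) && P (f @: S)]| = #|[set S' | P S']|.
Proof.
move=> f_inj f_onto.
have imsetK (S : {set T}) : S \subset K -> K :&: f @^-1: (f @: S) = S.
  move=> SK; apply/setP => x; rewrite !inE.
  apply/andP/idP => [[xK /imsetP[y yS fxy]] | xS]; last by rewrite (subsetP SK) ?imset_f.
  by rewrite (f_inj x y) // (subsetP SK).
have preimsetK (S' : {set U}) : f @: (K :&: f @^-1: S') = S'.
  apply/setP => u; apply/imsetP/idP => [[x] | uS']; first by rewrite !inE => /andP[_ ?] ->.
  have /imsetP[x xK ux] : u \in f @: K by rewrite f_onto inE.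
  by exists x; rewrite // !inE xK -ux.
have imset_inj :
    {in [pred S : {set T} | S \subset K] &, injective (fun S : {set T} => f @: S)}.
  by move=> S1 S2 S1K S2K /= eq12; rewrite -(imsetK S1) // eq12 imsetK.
rewrite -(card_in_imset (sub_in2 _ imset_inj)) => [|S]; last by rewrite !inE => /andP[].
apply: eq_card => S'; rewrite inE; apply/imsetP/idP => [[S] | PS'].
  by rewrite inE => /andP[_ PS] ->.
by exists (K :&: f @^-1: S'); rewrite ?inE ?subsetIl ?preimsetK.
Qed.

Theorem corollary3p7 (F : finFieldType) (d : nat)
  (hd5 : (5 <= d)%N) (hdq : (d <= #|F|)%N)
  (j1 j2 : option F) (g1 g2 : F)
  (hj : j1 != j2) (hg1 : g1 != 0) (hg2 : g2 != 0)
  (hcoset : coset_weight d (v2 j1 j2 g1 g2) 2)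
  (beta : F) (hbeta : (#|F|.-1).-primitive_root beta)
  (lam : 'I_(#|F|.-1)) (hlam : beta ^+ lam = - g2 / g1) :
  coset_B d (v2 j1 j2 g1 g2) (d - 2) = Pplus #|F|.-1 (d - 2) lam.
Proof.
have [psi [psiE psi_inj psi_onto]] := exists_log_ratio hj hbeta.
rewrite card_coset_d2 // /Pplus.
rewrite -(card_subsets_imset (fun S' : {set 'I_(#|F|.-1)} => (#|S'| == d - 2) &&
  (\sum_(i in S') (i : nat) == lam %[mod #|F|.-1]))%N psi_inj psi_onto).
apply: eq_card => S; rewrite !inE -andbA; have [SK|] //= := boolP (S \subset _).
have psi_injS : {in S &, injective psi} := sub_in2 (subsetP SK) psi_inj.
by rewrite card_in_imset // big_imset //= (locator_relation_log hbeta hg1 hlam psiE SK).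
Qed.
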